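(* Let $G$ be a flat affine group scheme over $R$, let $\mathfrak a\subset R[G]$ be its augmentation ideal, and let $N\to G$ be the automatic blowup of the identity. Then $R[N]$ is the $R[G]$-subalgebra of $K[G]$ generated by $\bigcup_{n\ge0}\pi^{-n}\mathfrak a$, and the set $\bigcup_{n\ge0}\pi^{-n}\mathfrak a$ generates the augmentation ideal of $R[N]$.
   Context: $R$ is a discrete valuation ring with uniformizer $\pi$, fraction field $K$, residue field $k$; $R[G]\subset K[G]$ for flat $G$. The Neron blowup of a flat affine group scheme $H$ at a closed subgroup of $H\otimes k$ with ideal $J\subset R[H]$ (inverse image of its ideal) is $\mathrm{Spec}$ of the subring of $K[H]$ generated by $R[H]$ and $\pi^{-1}J$. The automatic blowup of the identity $N\to G$ is the limit of $\cdots\to G_{n+1}\to G_n\to\cdots\to G_0=G$, where $G_{n+1}\to G_n$ is the Neron blowup of $G_n$ at the trivial subgroup $\{e\}\subset G_n\otimes k$; thus $R[N]=\bigcup_n R[G_n]\subset K[G]$. *)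

From HB Require Import structures.
From mathcomp Require Import all_boot all_order all_algebra.
Set Implicit Arguments. Unset Strict Implicit. Unset Printing Implicit Defensive.
Import Order.TTheory GRing.Theory Num.Theory.
Local Open Scope ring_scope.

Definition is_subring (A : nzRingType) (S : A -> Prop) : Prop :=
  [/\ S 1, (forall x y, S x -> S y -> S (x - y)) & (forall x y, S x -> S y -> S (x * y))].

Definition gen_subring (A : nzRingType) (S : A -> Prop) : A -> Prop :=
  fun x => forall T : A -> Prop, is_subring T -> (forall y, S y -> T y) -> T x.

Definition is_ideal_of (A : comNzRingType) (Rg I : A -> Prop) : Prop :=
  [/\ (forall x, I x -> Rg x), I 0, (forall x y, I x -> I y -> I (x + y))
    & (forall r x, Rg r -> I x -> I (r * x))].

Definition gen_ideal (A : comNzRingType) (Rg S : A -> Prop) : A -> Prop :=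
  fun x => forall I : A -> Prop, is_ideal_of Rg I -> (forall y, S y -> I y) -> I x.

Definition is_dvr (K : fieldType) (R : K -> Prop) (pi : K) : Prop :=
  [/\ is_subring R, R pi, pi != 0, ~ R pi^-1
    & forall x : K, x != 0 ->
        exists (u : K) (n : int), [/\ R u, u != 0, R u^-1 & x = u * pi ^ n]].

(* Model of a flat affine group scheme G over R: A = K[G] (a commutative
   K-algebra), B = R[G] the R-form inside A (an R-subalgebra with
   K.B = A, i.e. A = B[1/pi]; flatness = torsion-freeness is automatic
   since B sits inside the K-vector space A), and eps : K[G] -> K the
   (K-linear) counit, mapping R[G] into R. *)
Definition is_R_form (K : fieldType) (R : K -> Prop) (pi : K)
    (A : comAlgType K) (eps : {rmorphism A -> K}) (B : A -> Prop) : Prop :=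
  [/\ is_subring B,
      (forall r x, R r -> B x -> B (r *: x)),
      (forall a : A, exists (n : nat) (b : A), B b /\ a = pi ^- n *: b),
      (forall (c : K) (a : A), eps (c *: a) = c * eps a)
    & (forall b, B b -> R (eps b))].

Definition aug_ideal (K : fieldType) (A : comAlgType K)
    (eps : {rmorphism A -> K}) (S : A -> Prop) : A -> Prop :=
  fun x => S x /\ eps x = 0.

(* Neron blowup of the R-form S at the trivial subgroup {e} of the special
   fibre: J = inverse image in S of the ideal of {e} in S (x) k, i.e.
   J = { f in S | eps f in pi R }, and the blowup is the subring of K[G]
   generated by S and pi^-1 J. *)
Definition neron_blowup_id (K : fieldType) (R : K -> Prop) (pi : K)
    (A : comAlgType K) (eps : {rmorphism A -> K}) (S : A -> Prop) : A -> Prop :=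
  gen_subring (fun x => S x \/
     exists f, [/\ S f, (exists r, R r /\ eps f = pi * r) & x = pi^-1 *: f]).

Definition blowup_stage (K : fieldType) (R : K -> Prop) (pi : K)
    (A : comAlgType K) (eps : {rmorphism A -> K}) (B : A -> Prop) (n : nat)
    : A -> Prop :=
  iter n (neron_blowup_id R pi eps) B.

Definition automatic_blowup (K : fieldType) (R : K -> Prop) (pi : K)
    (A : comAlgType K) (eps : {rmorphism A -> K}) (B : A -> Prop) : A -> Prop :=
  fun x => exists n, blowup_stage R pi eps B n x.

From HB Require Import structures.
From mathcomp Require Import all_boot all_order all_algebra.
Import GRing.Theory.
Set Implicit Arguments. Unset Strict Implicit. Unset Printing Implicit Defensive.
Local Open Scope ring_scope.

(* Write U for the union of the pi^-n a.  The set R[G] + U is a subring of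
   K[G]: U is stable under sums, products, multiplication by R[G] and
   division by pi.  It is also stable under the blowup step: if f = b + u
   has counit pi r, then b - pi r lies in the augmentation ideal a and
   pi^-1 f = r + pi^-1 (b - pi r) + pi^-1 u.  Conversely pi^-n a lies in
   R[G_n], so R[N] = R[G] + U.  The counit of b + u is that of b, hence the
   augmentation ideal of R[N] is U itself, which is an ideal of R[N]. *)

Section Subring.
Variable A : nzRingType.
Implicit Types S T : A -> Prop.

Lemma subring1 S : is_subring S -> S 1.
Proof. by case. Qed.

Lemma subringB S x y : is_subring S -> S x -> S y -> S (x - y).
Proof. by case=> _ hB _; apply: hB. Qed.

Lemma subringM S x y : is_subring S -> S x -> S y -> S (x * y).
Proof. by case=> _ _ hM; apply: hM. Qed.

Lemma subring0 S : is_subring S -> S 0.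
Proof. by move=> hS; rewrite -(subrr (1 : A)); apply: subringB => //; apply: subring1. Qed.

Lemma subringN S x : is_subring S -> S x -> S (- x).
Proof. by move=> hS hx; rewrite -sub0r; apply: subringB => //; apply: subring0. Qed.

Lemma subringD S x y : is_subring S -> S x -> S y -> S (x + y).
Proof. by move=> hS hx hy; rewrite -[y]opprK; apply: subringB => //; apply: subringN. Qed.

Lemma gen_subring_gen S x : S x -> gen_subring S x.
Proof. by move=> hx T _; apply. Qed.

Lemma gen_subring_min S T x :
  is_subring T -> (forall y, S y -> T y) -> gen_subring S x -> T x.
Proof. by move=> hT hST; apply. Qed.

Lemma gen_subring_subring S : is_subring (gen_subring S).
Proof.
split=> [T /subring1 //|x y hx hy T hT hST|x y hx hy T hT hST].
- by apply: subringB => //; [apply: hx | apply: hy].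
- by apply: subringM => //; [apply: hx | apply: hy].
Qed.

End Subring.

Lemma gen_ideal_idem (A : comNzRingType) (Rg I : A -> Prop) :
  is_ideal_of Rg I -> forall x, gen_ideal Rg I x <-> I x.
Proof. by move=> hI x; split=> [|hx J _]; [apply | apply]. Qed.

Section Blowup.
Variables (K : fieldType) (R : K -> Prop) (pi : K) (A : comAlgType K).
Variable eps : {rmorphism A -> K}.
Implicit Types B T : A -> Prop.

Local Notation stage := (blowup_stage R pi eps).
Local Notation blowup := (neron_blowup_id R pi eps).
Local Notation N := (automatic_blowup R pi eps).

Lemma neron_blowup_id_sub B x : B x -> blowup B x.
Proof. by move=> hx; apply: gen_subring_gen; left. Qed.

Lemma blowup_stage_subring B n : is_subring B -> is_subring (stage B n).
Proof. by case: n => [|n] // _; apply: gen_subring_subring. Qed.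

Lemma blowup_stage_mono B m n x : (m <= n)%N -> stage B m x -> stage B n x.
Proof.
move/subnK <-; elim: (n - m)%N => [|k IH] // hx.
by rewrite addSn /blowup_stage iterS; apply: neron_blowup_id_sub; apply: IH.
Qed.

Lemma automatic_blowup_subring B : is_subring B -> is_subring (N B).
Proof.
move=> hB; have hst n := blowup_stage_subring n hB.
have lift m n x : stage B m x -> stage B (maxn m n) x.
  by apply: blowup_stage_mono; apply: leq_maxl.
split; first by exists 0%N; apply: subring1.
- move=> x y [m hx] [n hy]; exists (maxn m n); apply: subringB => //.
  + exact: lift.
  + by rewrite maxnC; apply: lift.
- move=> x y [m hx] [n hy]; exists (maxn m n); apply: subringM => //.
  + exact: lift.
  + by rewrite maxnC; apply: lift.
Qed.

Lemma automatic_blowup_min B T x :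
    is_subring T -> (forall y, B y -> T y) ->
    (forall f r, T f -> R r -> eps f = pi * r -> T (pi^-1 *: f)) ->
  N B x -> T x.
Proof.
move=> hT hBT hTpi [n]; elim: n x => [|n IH] x; first exact: hBT.
rewrite /blowup_stage iterS; apply: gen_subring_min => // y [/IH //|].
by case=> f [/IH hf [r [hr er]] ->]; apply: hTpi er.
Qed.

Hypothesis Rsub : is_subring R.
Hypothesis epsZ : forall (c : K) (a : A), eps (c *: a) = c * eps a.

Lemma blowup_stage_aug B a n : aug_ideal eps B a -> stage B n (pi ^- n *: a).
Proof.
case=> ha ea; elim: n => [|n IH]; first by rewrite expr0 invr1 scale1r.
rewrite /blowup_stage iterS; apply: gen_subring_gen; right.
exists (pi ^- n *: a); split=> //; last by rewrite scalerA exprS invfM.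
by exists 0; split; [apply: subring0 | rewrite epsZ ea !mulr0].
Qed.

End Blowup.

Definition aug_frac (K : fieldType) (pi : K) (A : comAlgType K)
    (eps : {rmorphism A -> K}) (B : A -> Prop) : A -> Prop :=
  fun x => exists (n : nat) (a : A), aug_ideal eps B a /\ x = pi ^- n *: a.

Section AugFrac.
Variables (K : fieldType) (R : K -> Prop) (pi : K) (A : comAlgType K).
Variables (eps : {rmorphism A -> K}) (B : A -> Prop).
Hypotheses (Rsub : is_subring R) (Rpi : R pi) (pi_neq0 : pi != 0).
Hypotheses (Bsub : is_subring B) (BZ : forall r x, R r -> B x -> B (r *: x)).
Hypothesis epsZ : forall (c : K) (a : A), eps (c *: a) = c * eps a.

Local Notation U := (aug_frac pi eps B).
Local Notation N := (automatic_blowup R pi eps B).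

Lemma aug_frac_eps x : U x -> eps x = 0.
Proof. by case=> n [a [[_ ea] ->]]; rewrite epsZ ea mulr0. Qed.

Lemma aug_frac_aug a : aug_ideal eps B a -> U a.
Proof. by move=> ha; exists 0%N, a; rewrite expr0 invr1 scale1r. Qed.

Lemma aug_fracVpi u : U u -> U (pi^-1 *: u).
Proof. by case=> n [a [ha ->]]; exists n.+1, a; rewrite scalerA exprS invfM. Qed.

Lemma aug_fracN u : U u -> U (- u).
Proof.
case=> n [a [[ha ea] ->]]; exists n, (- a); rewrite scalerN; split=> //.
by split; [apply: subringN | rewrite rmorphN ea oppr0].
Qed.

Lemma aug_fracMl b u : B b -> U u -> U (b * u).
Proof.
move=> hb [n [a [[ha ea] ->]]]; exists n, (b * a); rewrite scalerAr; split=> //.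
by split; [apply: subringM | rewrite rmorphM ea mulr0].
Qed.

Lemma aug_fracM u v : U u -> U v -> U (u * v).
Proof.
case=> n [a [[ha ea] ->]] [m [c [[hc ec] ->]]]; exists (n + m)%N, (a * c).
rewrite -scalerAl -scalerAr scalerA exprD invfM; split=> //.
by split; [apply: subringM | rewrite rmorphM ea mul0r].
Qed.

Lemma aug_fracD u v : U u -> U v -> U (u + v).
Proof.
case=> n [a [[ha ea] ->]] [m [c [[hc ec] ->]]].
have Rexp k : R (pi ^+ k).
  by elim: k => [|k IH]; [apply: subring1 | rewrite exprS; apply: subringM].
exists (n + m)%N, (pi ^+ m *: a + pi ^+ n *: c); split.
  split; first by apply: subringD => //; apply: BZ.
  by rewrite rmorphD !epsZ ea ec !mulr0 addr0.
rewrite scalerDr !scalerA exprD invfM; congr (_ *: _ + _ *: _).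
  by rewrite -mulrA mulVf ?mulr1 ?expf_neq0.
by rewrite mulrAC mulVf ?mul1r ?expf_neq0.
Qed.

Lemma aug_frac0 : U 0.
Proof. by apply: aug_frac_aug; split; [apply: subring0 | apply: rmorph0]. Qed.

Definition form_plus_aug_frac x := exists b u, [/\ B b, U u & x = b + u].

Lemma form_plus_aug_frac_form b : B b -> form_plus_aug_frac b.
Proof. by move=> hb; exists b, 0; rewrite addr0; split=> //; apply: aug_frac0. Qed.

Lemma form_plus_aug_frac_aug u : U u -> form_plus_aug_frac u.
Proof. by move=> hu; exists 0, u; rewrite add0r; split=> //; apply: subring0. Qed.

Lemma form_plus_aug_frac_subring : is_subring form_plus_aug_frac.
Proof.
split.
- by apply: form_plus_aug_frac_form; apply: subring1.
- move=> _ _ [b [u [hb hu ->]]] [c [v [hc hv ->]]]; exists (b - c), (u - v).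
  rewrite opprD addrACA; split=> //; first exact: subringB.
  by apply: aug_fracD => //; apply: aug_fracN.
- move=> _ _ [b [u [hb hu ->]]] [c [v [hc hv ->]]].
  exists (b * c), (b * v + c * u + u * v); split.
  + exact: subringM.
  + by apply: aug_fracD; [apply: aug_fracD; apply: aug_fracMl | apply: aug_fracM].
  + by rewrite mulrDl !mulrDr [u * c]mulrC !addrA.
Qed.

Lemma form_plus_aug_fracVpi f r :
  form_plus_aug_frac f -> R r -> eps f = pi * r ->
  form_plus_aug_frac (pi^-1 *: f).
Proof.
case=> b [u [hb hu ->]] hr ef.
have eb : eps b = pi * r by rewrite -ef rmorphD (aug_frac_eps hu) addr0.
have hb1 : B (r *: 1) by apply: BZ => //; apply: subring1.
exists (r *: 1), (pi^-1 *: (b - (pi * r) *: 1) + pi^-1 *: u); split=> //.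
  apply: aug_fracD; apply: aug_fracVpi => //; apply: aug_frac_aug; split.
    by apply: subringB => //; apply: BZ => //; [apply: subringM | apply: subring1].
  by rewrite rmorphB epsZ rmorph1 mulr1 eb subrr.
by rewrite scalerDr scalerBr scalerA mulKf // addrA [r *: 1 + _]addrC subrK.
Qed.

Lemma automatic_blowup_aug_frac u : U u -> N u.
Proof. by case=> n [a [ha ->]]; exists n; apply: blowup_stage_aug. Qed.

Lemma automatic_blowupE x : N x <-> form_plus_aug_frac x.
Proof.
split.
- apply: automatic_blowup_min; first exact: form_plus_aug_frac_subring.
    exact: form_plus_aug_frac_form.
  by move=> f r; apply: form_plus_aug_fracVpi.
- case=> b [u [hb hu ->]]; apply: subringD.
  + exact: automatic_blowup_subring.
  + by exists 0%N.
  + exact: automatic_blowup_aug_frac.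
Qed.

Lemma aug_automatic_blowupE x : aug_ideal eps N x <-> U x.
Proof.
split=> [[/automatic_blowupE [b [u [hb hu ->]]] e0] | hx].
  apply: aug_fracD => //; apply: aug_frac_aug; split=> //.
  by move: e0; rewrite rmorphD (aug_frac_eps hu) addr0.
by split; [apply: automatic_blowup_aug_frac | apply: aug_frac_eps].
Qed.

Lemma aug_frac_ideal : is_ideal_of N U.
Proof.
split.
- exact: automatic_blowup_aug_frac.
- exact: aug_frac0.
- exact: aug_fracD.
- move=> _ v /automatic_blowupE [b [u [hb hu ->]]] hv.
  by rewrite mulrDl; apply: aug_fracD; [apply: aug_fracMl | apply: aug_fracM].
Qed.

Lemma gen_subring_form_aug_frac x :
  gen_subring (fun y => B y \/ U y) x <-> N x.
Proof.
apply: iff_trans (iff_sym (automatic_blowupE x)); split.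
- apply: gen_subring_min; first exact: form_plus_aug_frac_subring.
  by move=> y [/form_plus_aug_frac_form | /form_plus_aug_frac_aug].
- case=> b [u [hb hu ->]]; apply: (subringD (gen_subring_subring _)).
  + by apply: gen_subring_gen; left.
  + by apply: gen_subring_gen; right.
Qed.

End AugFrac.

Theorem proposition2p20 (K : fieldType) (R : K -> Prop) (pi : K)
    (A : comAlgType K) (eps : {rmorphism A -> K}) (B : A -> Prop) :
  is_dvr R pi -> is_R_form R pi eps B ->
  let U : A -> Prop := fun x =>
    exists (n : nat) (a : A), aug_ideal eps B a /\ x = pi ^- n *: a in
  (forall x, automatic_blowup R pi eps B x <->
             gen_subring (fun y => B y \/ U y) x) /\
  (forall x, aug_ideal eps (automatic_blowup R pi eps B) x <->
             gen_ideal (automatic_blowup R pi eps B) U x).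
Proof.
case=> Rsub Rpi pi_neq0 _ _ [Bsub BZ _ epsZ _] U; split=> x.
  by apply: iff_sym; apply: gen_subring_form_aug_frac.
apply: iff_trans (aug_automatic_blowupE Rsub Rpi pi_neq0 Bsub BZ epsZ x) _.
by apply: iff_sym; apply: gen_ideal_idem; apply: aug_frac_ideal.
Qed.
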